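(* Let $\mathcal{X}$ be the graph obtained from the icosahedron graph (the 1-skeleton of the regular icosahedron; 12 vertices, 5-regular, planar) by deleting one edge $\{a,b\}$. Then the maximum size of an independent set of $\mathcal{X}$ is $4$, and both $a$ and $b$ belong to every maximum independent set of $\mathcal{X}$.
   Context: An independent set is a set of pairwise non-adjacent vertices; a maximum independent set is one of largest possible size. *)

From mathcomp Require Import all_boot.
Set Implicit Arguments. Unset Strict Implicit. Unset Printing Implicit Defensive.

(* Icosahedron graph on vertices 0..11:
   0 = top, 1..5 = upper pentagon, 6..10 = lower pentagon, 11 = bottom.
   upper i (1<=i<=5) is adjacent to lower 5+i and lower 5+(i mod 5)+1. *)
Definition ico_edge_nat (u v : nat) : bool :=
  [|| (u == 0) && (1 <= v <= 5),
      (1 <= u <= 5) && (1 <= v <= 5) && ((v == (u %% 5).+1)),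
      (6 <= u <= 10) && (6 <= v <= 10) && ((v - 6) == (u - 6).+1 %% 5),
      (1 <= u <= 5) && ((v == 5 + u) || (v == 5 + (u %% 5).+1))
    | (6 <= u <= 10) && (v == 11)].

Definition ico_adj : rel 'I_12 :=
  fun u v => ico_edge_nat u v || ico_edge_nat v u.

Definition del_edge (T : finType) (e : rel T) (a b : T) : rel T :=
  fun u v => e u v && ~~ ((u == a) && (v == b) || (u == b) && (v == a)).

Definition independent (T : finType) (e : rel T) (S : {set T}) : bool :=
  [forall u in S, forall v in S, ~~ e u v].

Definition alpha (T : finType) (e : rel T) : nat :=
  \max_(S : {set T} | independent e S) #|S|.

Definition maximum_independent (T : finType) (e : rel T) (S : {set T}) : bool :=
  independent e S && (#|S| == alpha e).

(* The independence number of the icosahedron is 3.  After deleting the edge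
   ab, an independent set S that misses a or b is still independent in the
   icosahedron, and S minus a always is; hence alpha <= 4, and an independent
   set of size 4 must contain both a and b.  Such sets exist: a and b have two
   non-adjacent common non-neighbours. *)
From mathcomp Require Import all_boot.

Set Implicit Arguments.
Unset Strict Implicit.
Unset Printing Implicit Defensive.

Definition independent_seq (T : eqType) (e : rel T) (s : seq T) : bool :=
  uniq s && all2rel (fun u v => ~~ e u v) s.

Section IndependentSets.

Variables (T : finType) (e : rel T).

Lemma independentP (S : {set T}) :
  reflect {in S &, forall u v, ~~ e u v} (independent e S).
Proof.
by apply: (iffP 'forall_in_forall_inP) => [H u v uS | H u uS v]; apply: H.
Qed.

Lemma independentS (A B : {set T}) :
  A \subset B -> independent e B -> independent e A.
Proof.
move=> /subsetP sAB /independentP indB.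
by apply/independentP => u v /sAB uB /sAB vB; apply: indB.
Qed.

Lemma card_le_alpha (S : {set T}) : independent e S -> #|S| <= alpha e.
Proof. exact: leq_bigmax_cond. Qed.

Lemma independent_seq_set (s : seq T) :
  independent_seq e s -> independent e [set x in s].
Proof.
case/andP=> _ /allrelP inds.
by apply/independentP => u v; rewrite !inE; apply: inds.
Qed.

Lemma alpha_ge_seq (s : seq T) : independent_seq e s -> size s <= alpha e.
Proof.
move=> inds; have /andP[uniq_s _] := inds.
by rewrite -(card_uniqP uniq_s) -cardsE card_le_alpha ?independent_seq_set.
Qed.

Lemma alpha_le_seq (k : nat) :
  (forall s : seq T, size s = k.+1 -> ~~ independent_seq e s) -> alpha e <= k.
Proof.
move=> noind; apply/bigmax_leqP => S /independentP indS.
rewrite leqNgt; apply/card_geqP => -[s [uniq_s size_s sS]].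
have /negP := noind s size_s; apply; rewrite /independent_seq uniq_s.
by apply/allrelP => u v /sS uS /sS vS; apply: indS.
Qed.

End IndependentSets.

Section DeleteEdge.

Variables (T : finType) (e : rel T) (a b : T).

Lemma independent_del_edge (S : {set T}) :
  independent (del_edge e a b) S -> (a \notin S) || (b \notin S) ->
  independent e S.
Proof.
move=> /independentP indS abS; apply/independentP => u v uS vS.
apply: contraNN (indS u v uS vS) => euv; rewrite /del_edge euv /=.
by apply: (contraL _ abS) => /orP[] /andP[/eqP<- /eqP<-]; rewrite uS vS.
Qed.

Lemma independent_del_edgeD1 (S : {set T}) :
  independent (del_edge e a b) S -> independent e (S :\ a).
Proof.
move=> indS; apply: independent_del_edge; last by rewrite setD11.
exact: independentS (subsetDl S [set a]) indS.
Qed.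

Lemma alpha_del_edge : alpha (del_edge e a b) <= (alpha e).+1.
Proof.
apply/bigmax_leqP => S indS; rewrite (cardsD1 a) -add1n leq_add ?leq_b1 //.
exact/card_le_alpha/independent_del_edgeD1.
Qed.

End DeleteEdge.

(* [ord_enum n] with [insub] replaced by its transparent variant [insub_eq]:
   [insub] matches on the opaque [idP], which blocks [vm_compute]. *)
Definition ord_list (n : nat) : seq 'I_n := pmap (@insub_eq _ _ _) (iota 0 n).

Lemma mem_ord_list (n : nat) (i : 'I_n) : i \in ord_list n.
Proof. by rewrite /ord_list (eq_pmap (@insub_eqE _ _ _)) mem_ord_enum. Qed.

Lemma ord_list_allP (n : nat) (P : pred 'I_n) :
  reflect (forall i, P i) (all P (ord_list n)).
Proof.
by apply: (iffP allP) => [H i | H i _]; apply: H; apply: mem_ord_list.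
Qed.

Lemma ord_list_hasP (n : nat) (P : pred 'I_n) :
  reflect (exists i, P i) (has P (ord_list n)).
Proof. by apply: (iffP hasP) => [[i _ Pi] | [i Pi]]; exists i; rewrite ?mem_ord_list. Qed.

Lemma ico_adj_no_independent4 :
  all (fun u => all (fun v => all (fun w => all (fun x =>
    ~~ independent_seq ico_adj [:: u; v; w; x])
  (ord_list 12)) (ord_list 12)) (ord_list 12)) (ord_list 12).
Proof. by vm_compute. Qed.

Lemma alpha_ico_adj : alpha ico_adj = 3.
Proof.
apply/anti_leq/andP; split.
  apply: alpha_le_seq => -[|u [|v [|w [|x []]]]] // _.
  by move: ico_adj_no_independent4 =>
    /ord_list_allP/(_ u)/ord_list_allP/(_ v)/ord_list_allP/(_ w)/ord_list_allP/(_ x).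
have indS : independent_seq ico_adj [:: @Ordinal 12 0 isT; @Ordinal 12 6 isT; @Ordinal 12 8 isT].
  by vm_compute.
exact: alpha_ge_seq indS.
Qed.

Lemma ico_del_edge_has_independent4 :
  all (fun a => all (fun b => ico_adj a b ==> has (fun x => has (fun y =>
    independent_seq (del_edge ico_adj a b) [:: a; b; x; y])
  (ord_list 12)) (ord_list 12)) (ord_list 12)) (ord_list 12).
Proof. by vm_compute. Qed.

Lemma ico_del_edge_independent4 (a b : 'I_12) : ico_adj a b ->
  exists x y, independent_seq (del_edge ico_adj a b) [:: a; b; x; y].
Proof.
move: ico_del_edge_has_independent4 =>
  /ord_list_allP/(_ a)/ord_list_allP/(_ b)/implyP H /H /ord_list_hasP[x].
by move=> /ord_list_hasP[y]; exists x, y.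
Qed.

Theorem lemma3 (a b : 'I_12) :
  ico_adj a b ->
  alpha (del_edge ico_adj a b) = 4 /\
  (forall S : {set 'I_12},
     maximum_independent (del_edge ico_adj a b) S -> a \in S /\ b \in S).
Proof.
move=> ab.
have alpha_le4 : alpha (del_edge ico_adj a b) <= 4.
  by have := alpha_del_edge ico_adj a b; rewrite alpha_ico_adj.
have [x [y ind4]] := ico_del_edge_independent4 ab.
have alpha4 : alpha (del_edge ico_adj a b) = 4.
  by apply/anti_leq; rewrite alpha_le4 (alpha_ge_seq ind4).
split=> // S /andP[indS /eqP]; rewrite alpha4 => cardS.
apply/andP; apply: contraT; rewrite negb_and => abS.
by have := card_le_alpha (independent_del_edge indS abS); rewrite alpha_ico_adj cardS.
Qed.
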